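(* Let $e_1,\dots,e_k\in\mathbb{C}^{n\times n}$ be an anticommuting family and let $r:=\min_{i\in[k]}\mathrm{rk}(e_i^2)$. (1) If $r>n(1-1/c)$ for some positive integer $c$, then $k\le c\,n^{2/c}$. (2) If $r> n\left(1-\frac{1}{2(\log_2 n+1)}\right)$, then $k\le 2\log_2 n+1$.
   Context: A family $e_1,\dots,e_k$ of complex $n\times n$ matrices is called anticommuting if $e_ie_j=-e_je_i$ for all distinct $i,j\in[k]=\{1,\dots,k\}$. $\mathrm{rk}$ denotes matrix rank. *)

From HB Require Import structures.
From mathcomp Require Import all_boot all_order all_algebra.
From Stdlib Require Import Reals.

Set Implicit Arguments.
Unset Strict Implicit.
Unset Printing Implicit Defensive.

Delimit Scope R_scope with Re.
Local Open Scope ring_scope.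

Definition log2 (x : R) : R := (ln x / ln 2)%Re.

Definition anticommuting (C : ringType) (n k : nat) (e : 'I_k -> 'M[C]_n) : Prop :=
  forall i j : 'I_k, i != j -> e i *m e j = - (e j *m e i).

(* r := min_i rk(e_i^2); for k = 0 the (empty) minimum defaults to n. *)
Definition min_rank_sq (C : fieldType) (n k : nat) (e : 'I_k -> 'M[C]_n) : nat :=
  \big[minn/n]_(i < k) \rank (e i *m e i).

From HB Require Import structures.
From mathcomp Require Import all_boot all_order all_algebra.
From mathcomp Require Import zify.
From Stdlib Require Import Reals Lra.

Set Implicit Arguments.
Unset Strict Implicit.
Unset Printing Implicit Defensive.

Import GRing.Theory Num.Theory.

(* For S a subset of [k] let e_S be the ordered product of the e_j, j in S; then
   e_j e_S = (-1)^(|S| + [j in S]) e_S e_j.  Comparing a vanishing combination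
   sum_S a_S e_S with its (anti)commutator with e_j, after right multiplication by
   suitable words, kills every term whose sign pattern differs from that of a
   fixed S on a set J containing S; the surviving term is a_S times a product of
   squares e_j^2 (j in J), which is nonzero as soon as the rank deficiencies
   n - rk(e_j^2) sum to less than n.  So families of subsets with pairwise
   distinct sign patterns give linearly independent matrices, hence at most n^2
   of them.  The c-subsets give C(k, c) <= n^2, i.e. k <= c n^(2/c); the subsets
   of m - 1 indices, an m-th index separating parities, give 2^(m-1) <= n^2,
   which is absurd for m the least integer above 2 log2 n + 1 if k >= m. *)

Section AnticommutingMonomials.
Local Open Scope ring_scope.

Variables (C : fieldType) (n k : nat) (e : 'I_k -> 'M[C]_n).
Hypothesis e_anti : anticommuting e.

Definition eprod (w : seq 'I_k) : 'M[C]_n := foldr (fun j M => e j *m M) 1%:M w.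
Definition sqprod (w : seq 'I_k) : 'M[C]_n := foldr (fun j M => e j *m e j *m M) 1%:M w.

Lemma eprod_cat u v : eprod (u ++ v) = eprod u *m eprod v.
Proof. by elim: u => [|a u IH] /=; rewrite ?mul1mx // IH mulmxA. Qed.

Lemma eprod_rcons u j : eprod (rcons u j) = eprod u *m e j.
Proof. by rewrite -cats1 eprod_cat /= mulmx1. Qed.

Lemma sqprod_cat u v : sqprod (u ++ v) = sqprod u *m sqprod v.
Proof. by elim: u => [|a u IH] /=; rewrite ?mul1mx // IH mulmxA. Qed.

Lemma e_eprodC j w :
  e j *m eprod w = (-1) ^+ count (predC1 j) w *: (eprod w *m e j).
Proof.
elim: w => [|a w IH] /=; first by rewrite mul1mx mulmx1 scale1r.
have [->|a_neq_j] := eqVneq a j; rewrite /= ?add0n ?add1n.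
  by rewrite {1}IH -scalemxAr mulmxA.
rewrite mulmxA e_anti 1?eq_sym // mulNmx -(mulmxA (e a) (e j)) IH -scalemxAr mulmxA.
by rewrite exprS mulN1r scaleNr.
Qed.

Lemma e_sqC a j : e a *m (e j *m e j) = e j *m e j *m e a.
Proof.
have [->|a_neq_j] := eqVneq a j; first by rewrite mulmxA.
by rewrite !mulmxA e_anti // mulNmx -!mulmxA e_anti // mulmxN opprK.
Qed.

Lemma e_sqprodC a w : e a *m sqprod w = sqprod w *m e a.
Proof.
elim: w => [|j w IH] /=; first by rewrite mul1mx mulmx1.
by rewrite mulmxA e_sqC -!mulmxA IH.
Qed.

Lemma eprod_rev w : eprod w *m eprod (rev w) = sqprod w.
Proof.
elim: w => [|a w IH] /=; first by rewrite mulmx1.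
by rewrite rev_cons eprod_rcons -!mulmxA (mulmxA (eprod w)) IH -e_sqprodC !mulmxA.
Qed.

Lemma eprod_double w : eprod (flatten [seq [:: j; j] | j <- w]) = sqprod w.
Proof. by elim: w => [|a w IH] //=; rewrite IH mulmxA. Qed.

Lemma rank_sqprod (w : seq 'I_k) :
  (n <= \rank (sqprod w) + \sum_(j <- w) (n - \rank (e j *m e j)))%nat.
Proof.
elim: w => [|a w IH] /=; first by rewrite big_nil addn0 mxrank1.
rewrite big_cons.
have := mxrank_mul_min (e a *m e a) (sqprod w).
have := rank_leq_col (e a *m e a).
lia.
Qed.

Lemma sqprod_neq0 (w : seq 'I_k) :
  (\sum_(j <- w) (n - \rank (e j *m e j)) < n)%nat -> sqprod w != 0.
Proof. by move=> small; rewrite -mxrank_eq0 -lt0n; have := rank_sqprod w; lia. Qed.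

Hypothesis two_neq0 : (2 : C) != 0.

Lemma sum_sign_filter (I : finType) (P : pred I) (A : 'M[C]_n) (X : I -> 'M[C]_n)
    (eps : I -> bool) (a : I -> C) (b : bool) :
  (forall i, A *m X i = (-1) ^+ eps i *: (X i *m A)) ->
  \sum_(i | P i) a i *: X i = 0 ->
  \sum_(i | P i && (eps i == b)) a i *: (X i *m A) = 0.
Proof.
move=> AX sum0.
have sign_eq x : x != b -> (-1) ^+ x - (-1) ^+ (~~ b) = 0 :> C.
  by case: x; case: b => //= _; rewrite subrr.
have sign_neq0 : (-1) ^+ b - (-1) ^+ (~~ b) != 0 :> C.
  by case: b sign_eq => _; rewrite /= expr0 expr1 ?opprK -?opprD ?oppr_eq0 -mulr2n.
have term i : A *m (a i *: X i) - (-1) ^+ (~~ b) *: (a i *: X i *m A)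
    = ((-1) ^+ eps i - (-1) ^+ (~~ b)) *: (a i *: (X i *m A)).
  by rewrite -scalemxAr AX -scalemxAl !scalerA mulrBl scalerBl [a i * _]mulrC.
have : A *m (\sum_(i | P i) a i *: X i)
    - (-1) ^+ (~~ b) *: ((\sum_(i | P i) a i *: X i) *m A) = 0.
  by rewrite sum0 mulmx0 mul0mx scaler0 subrr.
rewrite mulmx_sumr mulmx_suml scaler_sumr -sumrB (bigID (fun i => eps i == b)) /=.
rewrite [X in _ + X]big1 ?addr0 => [|i /andP[_ eps_neq_b]]; last first.
  by rewrite term sign_eq // scale0r.
under eq_bigr => i /andP[_ /eqP eps_b] do rewrite term eps_b.
rewrite -scaler_sumr => /eqP; rewrite scaler_eq0 => /orP[|/eqP //].
by rewrite (negbTE sign_neq0).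
Qed.

Definition parity (S : {set 'I_k}) (j : 'I_k) : bool := odd #|S| (+) (j \in S).

Lemma e_eprod_setC (S : {set 'I_k}) j w :
  e j *m (eprod (enum S) *m eprod w)
    = (-1) ^+ (parity S j (+) odd (count (predC1 j) w))
        *: (eprod (enum S) *m eprod w *m e j).
Proof.
rewrite -eprod_cat e_eprodC -signr_odd count_cat oddD; congr (_ ^+ (_ (+) _) *: _).
rewrite /parity cardE -(count_predC (pred1 j)) oddD count_uniq_mem ?enum_uniq // mem_enum.
by case: (j \in S); case: (odd _).
Qed.

Lemma eprod_sum_agree (I : finType) (s : I -> {set 'I_k}) (a : I -> C) (i0 : I) :
  \sum_i a i *: eprod (enum (s i)) = 0 ->
  forall w, \sum_(i | all (fun j => parity (s i) j == parity (s i0) j) w)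
              a i *: (eprod (enum (s i)) *m eprod w) = 0.
Proof.
move=> sum0; elim/last_ind => [|w j IH].
  by rewrite -[RHS]sum0; apply: eq_bigr => i _; rewrite mulmx1.
have := sum_sign_filter (parity (s i0) j (+) odd (count (predC1 j) w))
  (fun i => e_eprod_setC (s i) j w) IH.
move=> filtered; rewrite -[RHS]filtered.
apply: eq_big => [i|i _]; last by rewrite eprod_rcons mulmxA.
rewrite all_rcons andbC /=.
by case: (parity (s i) j); case: (parity (s i0) j); case: (odd _).
Qed.

Lemma mem_flatten_double (j : 'I_k) w :
  (j \in flatten [seq [:: x; x] | x <- w]) = (j \in w).
Proof. by elim: w => [|x w IH] //=; rewrite !inE IH orbA orbb. Qed.

Lemma sqprod_setD_neq0 (S J : {set 'I_k}) : S \subset J ->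
  (\sum_(j in J) (n - \rank (e j *m e j)) < n)%nat ->
  sqprod (enum S) *m sqprod (enum (J :\: S)) != 0.
Proof.
move=> sSJ small; rewrite -sqprod_cat sqprod_neq0 // big_cat /= !big_enum /=.
by rewrite (big_setID S) /= (setIidPr sSJ) in small.
Qed.

Lemma eprod_sum_eq0 (I : finType) (s J : I -> {set 'I_k}) (a : I -> C) :
  (forall i i', i' != i -> exists2 j, j \in J i & parity (s i') j != parity (s i) j) ->
  (forall i, s i \subset J i) ->
  (forall i, \sum_(j in J i) (n - \rank (e j *m e j)) < n)%nat ->
  \sum_i a i *: eprod (enum (s i)) = 0 -> forall i, a i = 0.
Proof.
move=> separated sJ small sum0 i0.
(* [e_S *m eprod w] is the product of the squares over [J i0]. *)
pose w := rev (enum (s i0)) ++ flatten [seq [:: j; j] | j <- enum (J i0 :\: s i0)].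
have J_w j : j \in J i0 -> j \in w.
  by rewrite mem_cat mem_rev mem_flatten_double !mem_enum in_setD => ->; rewrite andbT orbN.
have := eprod_sum_agree i0 sum0 w.
rewrite (bigD1 i0) /=; last exact/allP.
rewrite big1 ?addr0 => [|i /andP[/allP agree i_neq_i0]]; last first.
  have [j /J_w /agree] := separated i0 i i_neq_i0.
  by move=> /eqP ->; rewrite eqxx.
rewrite eprod_cat mulmxA eprod_rev eprod_double => /eqP.
by rewrite scaler_eq0 (negbTE (sqprod_setD_neq0 (sJ i0) (small i0))) orbF => /eqP.
Qed.

Lemma card_le_sqr (I : finType) (s J : I -> {set 'I_k}) :
  (forall i i', i' != i -> exists2 j, j \in J i & parity (s i') j != parity (s i) j) ->
  (forall i, s i \subset J i) ->
  (forall i, \sum_(j in J i) (n - \rank (e j *m e j)) < n)%nat ->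
  (#|I| <= n * n)%nat.
Proof.
move=> separated sJ small.
pose M := \matrix_(l < #|I|) mxvec (eprod (enum (s (enum_val l)))).
suff /eqP <- : row_free M by exact: rank_leq_col.
rewrite -kermx_eq0; apply/eqP/row_matrixP => l; rewrite row0.
have vM0 : row l (kermx M) *m M = 0 by rewrite -row_mul mulmx_ker row0.
apply/rowP => i; rewrite mxE [RHS]mxE.
apply: (@eprod_sum_eq0 _ (s \o enum_val) (J \o enum_val) (fun i => kermx M l i)).
- move=> i1 i2 i2_neq_i1; apply: separated.
  by apply: contra i2_neq_i1 => /eqP/enum_val_inj ->.
- by move=> ?; apply: sJ.
- by move=> ?; apply: small.
- apply/eqP; rewrite -mxvec_eq0 linear_sum /=; apply/eqP; rewrite -[RHS]vM0 mulmx_sum_row.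
  by apply: eq_bigr => i1 _; rewrite linearZ rowK [row _ _ _ _]mxE.
Qed.

Lemma parity_separates_card (S S' : {set 'I_k}) :
  #|S'| = #|S| -> S' != S -> exists2 j, j \in S & parity S' j != parity S j.
Proof.
move=> card_eq S'_neq_S.
have /subsetPn [j Sj S'j] : ~~ (S \subset S').
  by apply: contra S'_neq_S => sSS'; rewrite eq_sym eqEcard sSS' card_eq /=.
by exists j => //; rewrite /parity card_eq Sj (negbTE S'j) addbF addbT; case: odd.
Qed.

Lemma parity_separates_avoid (S S' : {set 'I_k}) j0 :
  j0 \notin S :|: S' -> S' != S -> exists j, parity S' j != parity S j.
Proof.
rewrite inE negb_or => /andP[/negbTE Sj0 /negbTE S'j0] S'_neq_S; rewrite /parity.
have [odd_eq | odd_neq] := eqVneq (odd #|S'|) (odd #|S|); last first.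
  by exists j0; rewrite Sj0 S'j0 !addbF.
have [j j_diff] : exists j, (j \in S') != (j \in S).
  apply/existsP; apply: contraNT S'_neq_S => /existsPn same.
  by apply/eqP/setP => j; move: (same j); case: (j \in S'); case: (j \in S).
by exists j; rewrite odd_eq; move: j_diff; case: (j \in S'); case: (j \in S); case: odd.
Qed.

Variable d : nat.
Hypothesis deficiency_le : forall j, (n - \rank (e j *m e j) <= d)%nat.

Lemma sum_deficiency_le (J : {set 'I_k}) :
  (\sum_(j in J) (n - \rank (e j *m e j)) <= #|J| * d)%nat.
Proof. by rewrite -sum_nat_const leq_sum. Qed.

Lemma binomial_le_sqr c : (c * d < n)%nat -> ('C(k, c) <= n * n)%nat.
Proof.
move=> cd_lt_n; pose I := {S : {set 'I_k} | #|S| == c}.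
have <- : #|{: I}| = 'C(k, c).
  by rewrite card_sig -[k in 'C(k, _)]card_ord -card_draws; apply: eq_card => S; rewrite !inE.
apply: (card_le_sqr (s := val) (J := val)).
- move=> [S cardS] [S' cardS'] S'_neq_S; apply: parity_separates_card => //=.
  by rewrite (eqP cardS) (eqP cardS').
- by move=> S; apply: subxx.
- move=> [S cardS]; apply: leq_ltn_trans (sum_deficiency_le S) _.
  by rewrite (eqP cardS).
Qed.

Lemma exp2_le_sqr : (0 < k)%nat -> (k * d < n)%nat -> (expn 2 (k - 1) <= n * n)%nat.
Proof.
move=> k_gt0 kd_lt_n.
have pred_lt_k : (k.-1 < k)%nat by rewrite ltn_predL.
pose j0 := Ordinal pred_lt_k; pose I := {S : {set 'I_k} | S \subset [set~ j0]}.
have <- : #|{: I}| = expn 2 (k - 1).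
  rewrite card_sig subn1 -[in RHS](card_ord k) -(cardsC1 j0) -card_powerset.
  by apply: eq_card => S; rewrite powersetE inE.
apply: (card_le_sqr (s := val) (J := fun=> setT)).
- move=> [S sS] [S' sS'] S'_neq_S.
  have j0_out : j0 \notin S :|: S'.
    by rewrite inE negb_or; apply/andP; split; apply/negP;
       [move/(subsetP sS) | move/(subsetP sS')]; rewrite !inE eqxx.
  by have [j] := parity_separates_avoid j0_out S'_neq_S; exists j; rewrite ?inE.
- by move=> S; apply: subsetT.
- move=> _; apply: leq_ltn_trans (sum_deficiency_le _) _.
  by rewrite cardsT card_ord.
Qed.

End AnticommutingMonomials.

Lemma anticommuting_comp (C : nzRingType) (n m k : nat) (e : 'I_k -> 'M[C]_n)
    (f : 'I_m -> 'I_k) :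
  injective f -> anticommuting e -> anticommuting (e \o f).
Proof. by move=> f_inj e_anti i j i_neq_j; apply: e_anti; rewrite inj_eq. Qed.

Section MinRank.
Local Open Scope ring_scope.
Variables (C : fieldType) (n k : nat) (e : 'I_k -> 'M[C]_n).

Lemma min_rank_sq_le_n : (min_rank_sq e <= n)%nat.
Proof.
rewrite /min_rank_sq; apply: (big_ind (fun x => x <= n)%nat) => // [x y x_le_n _ | i _].
  by rewrite geq_min x_le_n.
exact: rank_leq_col.
Qed.

Lemma min_rank_sq_le_rank j : (min_rank_sq e <= \rank (e j *m e j))%nat.
Proof.
rewrite /min_rank_sq -minEnat -Order.NatOrder.leEnat.
exact: Order.TotalTheory.bigmin_le.
Qed.

End MinRank.

Lemma expn_le_mul_binomial (k c : nat) :
  (c <= k)%nat -> (expn k c <= expn c c * 'C(k, c))%nat.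
Proof.
move=> c_le_k; rewrite -(leq_pmul2r (fact_gt0 c)) -mulnA bin_ffact -ffactnn.
have expn_prod x : expn x c = \prod_(i < c) x by rewrite prod_nat_const card_ord.
rewrite !ffact_prod !expn_prod -!big_split /=; apply: leq_prod => i _.
have : (c * i <= k * i)%nat by rewrite leq_mul2r c_le_k orbT.
by rewrite !mulnBr; lia.
Qed.

Section RealBounds.
Local Open Scope R_scope.

Lemma INR_muln (a b : nat) : INR (a * b)%nat = INR a * INR b.
Proof. by rewrite -multE mult_INR. Qed.

Lemma INR_expn (a b : nat) : INR (expn a b) = INR a ^ b.
Proof. by elim: b => [|b IH] //; rewrite expnS INR_muln IH. Qed.

Lemma ln_le x y : 0 < x -> x <= y -> ln x <= ln y.
Proof. by move=> x_gt0 [/(ln_increasing _ _ x_gt0) /Rlt_le | <-] //; apply: Rle_refl. Qed.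

Lemma deficiency_lt (n r m : nat) (x : R) :
  (r <= n)%nat -> 0 < x -> INR m <= x -> INR n * (1 - / x) < INR r ->
  (m * (n - r) < n)%nat.
Proof.
move=> r_le_n x_gt0 m_le_x r_gt.
have x_deficiency : x * (INR n - INR r) < INR n.
  have : INR n * (1 - / x) * x = INR n * x - INR n by field; lra.
  have := Rmult_lt_compat_r x _ _ x_gt0 r_gt; lra.
have m_ge0 := pos_INR m.
have rR_le_nR : INR r <= INR n by apply/le_INR/leP.
apply/ltP/INR_lt; rewrite INR_muln -minusE minus_INR; last exact/leP.
nra.
Qed.

Lemma le_mul_Rpower (n k c : nat) : (0 < c)%nat -> (0 < n)%nat ->
  ((c <= k)%nat -> (expn k c <= expn c c * (n * n))%nat) ->
  INR k <= INR c * Rpower (INR n) (2 / INR c).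
Proof.
move=> c_gt0 n_gt0 pow_le.
have cR_gt0 : 0 < INR c by apply/lt_0_INR/ltP.
have nR_gt0 : 0 < INR n by apply/lt_0_INR/ltP.
have [c_le_k | k_lt_c] := leqP c k; last first.
  have : 1 <= Rpower (INR n) (2 / INR c).
    rewrite -(Rpower_O (INR n)) //; apply: Rle_Rpower.
      by apply: (le_INR 1); apply/leP.
    by apply: Rlt_le; apply: Rdiv_lt_0_compat; lra.
  have : INR k <= INR c by apply/le_INR/leP/ltnW.
  nra.
have kR_gt0 : 0 < INR k by apply/lt_0_INR/ltP/(leq_trans c_gt0).
have pow_le_R : Rpower (INR k) (INR c) <= Rpower (INR c) (INR c) * Rpower (INR n) (INR 2).
  rewrite !Rpower_pow // -!INR_expn -INR_muln.
  by apply/le_INR/leP; rewrite expnS expn1 pow_le.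
have inv_c_ge0 : 0 <= / INR c by apply/Rlt_le/Rinv_0_lt_compat.
have := @Rle_Rpower_l (Rpower (INR k) (INR c)) _ _ inv_c_ge0 (conj (exp_pos _) pow_le_R).
rewrite -Rpower_mult_distr ?Rpower_mult ?Rinv_r ?Rpower_1; try (exact: exp_pos); try lra.
by have -> : INR 2 * / INR c = 2 / INR c by rewrite /=; field; lra.
Qed.

Lemma le_2log2_add1 (n m : nat) : (0 < n)%nat -> (0 < m)%nat ->
  (expn 2 (m - 1) <= n * n)%nat -> INR m <= 2 * log2 (INR n) + 1.
Proof.
move=> n_gt0 m_gt0 pow_le.
have nR_gt0 : 0 < INR n by apply/lt_0_INR/ltP.
have ln2_gt0 : 0 < ln 2 by have := ln_lt_2; lra.
have pow_le_R : 2 ^ (m - 1) <= INR n * INR n.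
  by rewrite -INR_muln -[2]/(INR 2) -INR_expn; apply/le_INR/leP.
have := ln_le (pow_lt _ (m - 1) Rlt_0_2) pow_le_R.
rewrite ln_pow ?ln_mult; try lra.
rewrite -minusE minus_INR /=; last exact/leP.
move=> ln_le_R; apply: (Rmult_le_reg_r (ln 2)) => //; rewrite /log2.
have -> : (2 * (ln (INR n) / ln 2) + 1) * ln 2 = 2 * ln (INR n) + ln 2 by field; lra.
lra.
Qed.

Lemma nat_above (x : R) (k : nat) : 0 <= x -> x < INR k ->
  exists2 m : nat, (0 < m <= k)%nat & x < INR m <= x + 1.
Proof.
move=> x_ge0 x_lt_k; have [up_gt up_le] := archimed x.
have up_ge0 : (0 <= up x)%Z by apply: Z.lt_le_incl; apply: lt_IZR; lra.
have mE : INR (Z.to_nat (up x)) = IZR (up x) by rewrite INR_IZR_INZ Znat.Z2Nat.id.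
exists (Z.to_nat (up x)); last by rewrite mE; lra.
apply/andP; split; first by apply/ltP/INR_lt; rewrite mE /=; lra.
by rewrite -ltnS; apply/ltP/INR_lt; rewrite S_INR mE; lra.
Qed.

End RealBounds.

Theorem theorem4p3 (C : numClosedFieldType) (n k : nat) (e : 'I_k -> 'M[C]_n) :
  anticommuting e ->
  (forall c : nat, (0 < c)%N ->
     (INR (min_rank_sq e) > INR n * (1 - / INR c))%Re ->
     (INR k <= INR c * Rpower (INR n) (2 / INR c))%Re)
  /\
  ((INR (min_rank_sq e) > INR n * (1 - / (2 * (log2 (INR n) + 1))))%Re ->
     (INR k <= 2 * log2 (INR n) + 1)%Re).
Proof.
move=> e_anti; have r_le_n := min_rank_sq_le_n e.
have deficiency_le j := leq_sub2l n (min_rank_sq_le_rank e j).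
move: (pnatr_eq0 C 2) => /negbT two_neq0.
split=> [c c_gt0 r_gt | r_gt].
  have cd_lt_n : (c * (n - min_rank_sq e) < n)%nat.
    by apply: deficiency_lt r_gt => //; [apply/lt_0_INR/ltP | apply: Rle_refl].
  apply: le_mul_Rpower => // [|c_le_k]; first exact: leq_ltn_trans (leq0n _) cd_lt_n.
  rewrite (leq_trans (expn_le_mul_binomial c_le_k)) // leq_mul2l.
  by rewrite (binomial_le_sqr e_anti two_neq0 deficiency_le cd_lt_n) orbT.
have n_gt0 : (0 < n)%nat.
  rewrite lt0n; apply/negP => /eqP n0.
  have r0 : min_rank_sq e = 0%nat by apply/eqP; rewrite -leqn0 -n0.
  by move: r_gt; rewrite r0 n0 /=; lra.
pose L := log2 (INR n).
have L_ge0 : (0 <= L)%Re.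
  apply: Rmult_le_pos; last by apply/Rlt_le/Rinv_0_lt_compat; have := ln_lt_2; lra.
  by rewrite -ln_1; apply: ln_le; [lra | apply: (le_INR 1); apply/leP].
apply: Rnot_lt_le => k_gt.
have x_ge0 : (0 <= 2 * L + 1)%Re by lra.
have [m /andP[m_gt0 m_le_k] [m_gt m_le]] := nat_above x_ge0 k_gt.
have md_lt_n : (m * (n - min_rank_sq e) < n)%nat.
  by apply: (deficiency_lt (x := 2 * (L + 1))) r_gt => //; lra.
have widen_inj : injective (widen_ord m_le_k).
  by move=> i j /(congr1 val) eq_ij; apply: val_inj.
have := exp2_le_sqr (anticommuting_comp widen_inj e_anti) two_neq0
  (fun j => deficiency_le (widen_ord m_le_k j)) m_gt0 md_lt_n.
by move/(le_2log2_add1 n_gt0 m_gt0); rewrite -/L; lra.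
Qed.
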